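(* Let $P\in\{0,1\}^{k\times\ell}$ be a pattern with two rows $r_1\le r_2$ and a column $c$ such that for every $r\in[r_1,r_2]$, $P$ has no 1-entry in row $r$ except possibly $(r,c)$. Suppose moreover $P$ satisfies one of: Type 1: all 1-entries of $P$ above row $r_1$ lie in column $c$ or in row $r_1-1$, and all 1-entries below row $r_2$ lie in column $c$ or in row $r_2+1$; Type 2: all 1-entries above row $r_1$ lie in column $c$ or in row $r_1-1$, and all 1-entries below row $r_2$ lie in $P[(r_2,k]\times[c,\ell]]$; Type 3: all 1-entries above row $r_1$ lie in $P[[1,r_1)\times[c]]$, and all 1-entries below row $r_2$ lie in $P[(r_2,k]\times[c,\ell]]$. Then every 1-entry of $P$ in $[r_1,r_2]\times\{c\}$ is row-bounding.
   Context: All matrices are binary; rows numbered top to bottom, columns left to right; $(i,j)$ is the entry in row $i$, column $j$; $[a,b]=\{a,\dots,b\}$, $[a,b)=[a,b-1]$, $(a,b]=[a+1,b]$, $[n]=[1,n]$; $P[R\times C]$ is the submatrix on rows $R$ and columns $C$. $M\Delta f$ is $M$ with the value of entry $f$ switched. An embedding of $P\in\{0,1\}^{k\times\ell}$ into $M\in\{0,1\}^{m\times n}$ is a map $\phi:[k]\times[\ell]\to[m]\times[n]$ sending 1-entries to 1-entries such that if $e_1=(i_1,j_1)$, $e_2=(i_2,j_2)$ map to $(i_1^*,j_1^* )$, $(i_2^*,j_2^* )$, then $i_1<i_2\Rightarrow i_1^*<i_2^*$ and $j_1<j_2\Rightarrow j_1^*<j_2^*$. $M$ avoids $P$ if no embedding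 exists; $\mathrm{Av}(P)$ is the set of $P$-avoiding matrices. For a 1-entry $e$ of $P$ and $M\in\mathrm{Av}(P)$, a 0-entry $f$ of $M$ is critical for $e$ if some embedding of $P$ into $M\Delta f$ maps $e$ to $f$; a horizontal 0-run (maximal run of consecutive 0-entries in a row) is critical for $e$ if it contains a 0-entry critical for $e$. $e$ is row-bounding if there is a constant $K$ such that for every $M\in\mathrm{Av}(P)$ every row of $M$ contains at most $K$ horizontal 0-runs critical for $e$. *)

From mathcomp Require Import all_boot all_order all_algebra.
Set Implicit Arguments. Unset Strict Implicit. Unset Printing Implicit Defensive.

(* Binary matrices are 'M[bool]_(m, n); rows/columns are 0-based ordinals
   (row 0 is the top row, column 0 the leftmost column). *)

Definition is_embedding (k l m n : nat) (P : 'M[bool]_(k, l)) (M : 'M[bool]_(m, n))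
  (phi : 'I_k -> 'I_l -> 'I_m * 'I_n) : Prop :=
  [/\ (forall i j, P i j -> M (phi i j).1 (phi i j).2),
      (forall (i1 i2 : 'I_k) (j1 j2 : 'I_l), (i1 < i2)%N -> ((phi i1 j1).1 < (phi i2 j2).1)%N) &
      (forall (i1 i2 : 'I_k) (j1 j2 : 'I_l), (j1 < j2)%N -> ((phi i1 j1).2 < (phi i2 j2).2)%N)].

Definition avoids (k l m n : nat) (P : 'M[bool]_(k, l)) (M : 'M[bool]_(m, n)) : Prop :=
  ~ exists phi, is_embedding P M phi.

Definition switch (m n : nat) (M : 'M[bool]_(m, n)) (f : 'I_m * 'I_n) : 'M[bool]_(m, n) :=
  \matrix_(i, j) (if (i, j) == f then ~~ M i j else M i j).

Definition critical (k l m n : nat) (P : 'M[bool]_(k, l)) (e : 'I_k * 'I_l)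
  (M : 'M[bool]_(m, n)) (f : 'I_m * 'I_n) : Prop :=
  M f.1 f.2 = false /\
  exists phi, is_embedding P (switch M f) phi /\ phi e.1 e.2 = f.

Definition zero_run (m n : nat) (M : 'M[bool]_(m, n)) (i : 'I_m) (a b : 'I_n) : Prop :=
  [/\ (a <= b)%N,
      (forall j : 'I_n, (a <= j <= b)%N -> M i j = false),
      (forall j : 'I_n, j.+1 = a -> M i j = true) &
      (forall j : 'I_n, j = b.+1 :> nat -> M i j = true)].

Definition critical_run (k l m n : nat) (P : 'M[bool]_(k, l)) (e : 'I_k * 'I_l)
  (M : 'M[bool]_(m, n)) (i : 'I_m) (a b : 'I_n) : Prop :=
  zero_run M i a b /\ exists j : 'I_n, (a <= j <= b)%N /\ critical P e M (i, j).

(* e is row-bounding: uniformly bounded number of critical 0-runs (each run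
   identified by its pair (first column, last column)) in every row *)
Definition row_bounding (k l : nat) (P : 'M[bool]_(k, l)) (e : 'I_k * 'I_l) : Prop :=
  exists K : nat, forall (m n : nat) (M : 'M[bool]_(m, n)), avoids P M ->
    forall (i : 'I_m) (S : {set 'I_n * 'I_n}),
      (forall ab, ab \in S -> critical_run P e M i ab.1 ab.2) -> #|S| <= K.

From mathcomp Require Import all_boot all_order all_algebra zify.

(* Two critical 0-runs in one row of a P-avoiding M are separated by a 1-entry
   x. Let pa and pb be the embeddings into M with one entry switched that send
   e = (r, c) to a critical entry left, resp. right, of x. If all entries of pa
   right of column c lie beyond x, or all entries of pb left of c lie before x,
   moving e to x yields an embedding of P into M. Otherwise column c of pa lies
   left of x and column c of pb right of it, and P embeds into M by taking the
   entries left of c from pa, those right of c from pb, and sending e to x.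
   Rows stay increasing under this gluing because, outside the band [r1, r2]
   whose rows only meet column c, the rows above and below e either have their
   off-column 1-entries in a single row, which can be mixed between the lower
   and the higher of the two embeddings, or have them all on the side of c that
   is taken from one embedding. Hence each row has at most one critical run. *)

Definition row_increasing {k l : nat} (f : 'I_k -> 'I_l -> nat) : Prop :=
  forall (i1 i2 : 'I_k) (j1 j2 : 'I_l), i1 < i2 -> f i1 j1 < f i2 j2.

Definition col_increasing {k l : nat} (f : 'I_k -> 'I_l -> nat) : Prop :=
  forall (i1 i2 : 'I_k) (j1 j2 : 'I_l), j1 < j2 -> f i1 j1 < f i2 j2.

(* Rows above [u] take the map that is lowest on row [u], rows below take the
   highest one, so row [u] itself may be mixed arbitrarily. *)
Lemma splice_row_increasing {k l : nat} {S : finType} (R : S -> 'I_k -> 'I_l -> nat)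
    (u : 'I_k) (tau : 'I_l -> S) :
  (forall s, row_increasing (R s)) ->
  exists2 sig : 'I_k -> 'I_l -> S,
    (forall q, sig u q = tau q) & row_increasing (fun p q => R (sig p q) p q).
Proof.
move=> incR; have [q0 _ | l0] := pickP (@predT 'I_l); last first.
  by exists (fun _ q => tau q) => // i1 i2 j1; have := l0 j1.
pose F (z : S * 'I_l) := R z.1 u z.2.
case: (@arg_minnP _ (tau q0, q0) predT F erefl) => lo _ lo_min.
case: (@arg_maxnP _ (tau q0, q0) predT F erefl) => hi _ hi_max.
exists (fun p q => if p < u then lo.1 else if p == u then tau q else hi.1).
  by move=> q; rewrite ltnn eqxx.
have above (p : 'I_k) (q : 'I_l) : p < u -> R lo.1 p q < F lo by apply: incR.
have below (p : 'I_k) (q : 'I_l) : u < p -> F hi < R hi.1 p q by apply: incR.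
have on_u s q : F lo <= R s u q <= F hi.
  by apply/andP; split; [exact: (lo_min (s, q)) | exact: (hi_max (s, q))].
have lo_hi : F lo <= F hi by have /andP[] := on_u (tau q0) q0; apply: leq_trans.
move=> i1 i2 j1 j2 lt12 /=.
case: (ltngtP i1 u) => [lt1|gt1|/val_inj eq1]; case: (ltngtP i2 u) => [lt2|gt2|/val_inj eq2].
- exact: incR.
- exact: ltn_trans (above _ _ lt1) (leq_ltn_trans lo_hi (below _ _ gt2)).
- by rewrite eq2; apply: leq_trans (above _ _ lt1) _; case/andP: (on_u (tau j2) j2).
- by move: (ltn_trans gt1 (ltn_trans lt12 lt2)); rewrite ltnn.
- exact: incR.
- by move: (ltn_trans gt1 lt12); rewrite eq2 ltnn.
- by move: lt12; rewrite eq1 ltnNge ltnW.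
- by rewrite eq1; apply: leq_ltn_trans (below _ _ gt2); case/andP: (on_u (tau j1) j1).
- by move: lt12; rewrite eq1 eq2 ltnn.
Qed.

Lemma row_increasing_neq {k l : nat} (f : 'I_k -> 'I_l -> nat) p p' q q' :
  row_increasing f -> p != p' -> f p q != f p' q'.
Proof.
move=> inc; case: (ltngtP p p') => [lt|gt|/val_inj->]; last by rewrite eqxx.
- by rewrite neq_ltn inc.
- by rewrite neq_ltn (inc _ _ _ _ gt) orbT.
Qed.

Lemma col_increasing_neq {k l : nat} (f : 'I_k -> 'I_l -> nat) p p' q q' :
  col_increasing f -> q != q' -> f p q != f p' q'.
Proof.
move=> inc; case: (ltngtP q q') => [lt|gt|/val_inj->]; last by rewrite eqxx.
- by rewrite neq_ltn inc.
- by rewrite neq_ltn (inc _ _ _ _ gt) orbT.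
Qed.

Lemma col_increasing_dichotomy_right {k l : nat} {f : 'I_k -> 'I_l -> nat} (c : 'I_l) x :
  col_increasing f -> (forall p (q : 'I_l), c < q -> x < f p q) \/ (forall p, f p c < x).
Proof.
move=> inc; have [beyond|] := boolP [forall p, forall q : 'I_l, (c < q) ==> (x < f p q)].
  by left=> p q; apply/implyP; move/forallP/(_ p)/forallP: beyond.
case/forallPn=> p0 /forallPn[q0]; rewrite negb_imply -leqNgt => /andP[lt le].
by right=> p; apply: leq_trans (inc _ _ _ _ lt) le.
Qed.

Lemma col_increasing_dichotomy_left {k l : nat} {f : 'I_k -> 'I_l -> nat} (c : 'I_l) x :
  col_increasing f -> (forall p (q : 'I_l), q < c -> f p q < x) \/ (forall p, x < f p c).
Proof.
move=> inc; have [before|] := boolP [forall p, forall q : 'I_l, (q < c) ==> (f p q < x)].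
  by left=> p q; apply/implyP; move/forallP/(_ p)/forallP: before.
case/forallPn=> p0 /forallPn[q0]; rewrite negb_imply -leqNgt => /andP[lt le].
by right=> p; apply: leq_ltn_trans le (inc _ _ _ _ lt).
Qed.

Definition embeds_except {k l m n : nat} (P : 'M[bool]_(k, l)) (M : 'M[bool]_(m, n))
    (r : 'I_k) (c : 'I_l) (phi : 'I_k -> 'I_l -> 'I_m * 'I_n) : Prop :=
  [/\ forall p q, P p q -> (p, q) != (r, c) -> M (phi p q).1 (phi p q).2,
      row_increasing (fun p q => (phi p q).1) &
      col_increasing (fun p q => (phi p q).2)].

Section EmbeddingRepair.

Context {k l m n : nat} {P : 'M[bool]_(k, l)} {M : 'M[bool]_(m, n)} {r : 'I_k} {c : 'I_l}.

Lemma critical_embeds_except {f : 'I_m * 'I_n} :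
  critical P (r, c) M f -> exists2 phi, embeds_except P M r c phi & phi r c = f.
Proof.
case=> _ [phi [[ones rows cols] phi_e]]; exists phi => //; split=> // p q Ppq ne.
have := ones p q Ppq; rewrite /switch mxE -surjective_pairing -phi_e.
suff /negbTE-> : phi p q != phi r c by [].
rewrite xpair_eqE negb_and in ne; case/orP: ne => ne.
- by apply: contraNneq _ (row_increasing_neq _ _ _ q c rows ne) => ->.
- by apply: contraNneq _ (col_increasing_neq _ p r _ _ cols ne) => ->.
Qed.

Lemma embeds_except_relocate {phi} {i : 'I_m} {x : 'I_n} :
  embeds_except P M r c phi -> (phi r c).1 = i -> M i x ->
  (forall p (q : 'I_l), q < c -> (phi p q).2 < x) ->
  (forall p (q : 'I_l), c < q -> x < (phi p q).2) ->
  exists psi, is_embedding P M psi.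
Proof.
case=> ones rows cols phi_r Mx left right.
pose psi p q := if (p == r) && (q == c) then (i, x) else phi p q.
have psi_row p q : (psi p q).1 = (phi p q).1.
  by rewrite /psi; case: ifP => // /andP[/eqP-> /eqP->].
exists psi; split.
- move=> p q Ppq; rewrite /psi; case: ifP => [//|/negbT ne].
  by apply: ones; rewrite ?xpair_eqE.
- by move=> i1 i2 j1 j2 lt; rewrite !psi_row; apply: rows.
move=> i1 i2 j1 j2 lt; rewrite /psi.
case: ifP => [/andP[_ /eqP e1]|_]; case: ifP => [/andP[_ /eqP e2]|_] /=.
- by move: lt; rewrite e1 e2 ltnn.
- by apply: right; rewrite -e1.
- by apply: left; rewrite -e2.
- exact: cols.
Qed.

End EmbeddingRepair.

(* The rows [A] can be glued at column [c]: from any two row-increasing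
   placements one can select, entrywise, a row-increasing mixture that takes the
   1-entries of [A] left of [c] from [R true] and those right of [c] from
   [R false]. *)
Definition splittable {k l : nat} (P : 'M[bool]_(k, l)) (c : 'I_l) (A : pred 'I_k) : Prop :=
  forall R : bool -> 'I_k -> 'I_l -> nat, (forall s, row_increasing (R s)) ->
  exists2 sig : 'I_k -> 'I_l -> bool, row_increasing (fun p q => R (sig p q) p q) &
    forall p q, p \in A -> P p q -> q != c -> sig p q = (q < c).

Section Splittable.

Context {k l : nat} {P : 'M[bool]_(k, l)} {c : 'I_l} {A : pred 'I_k}.

Lemma splittable_one_row :
  (forall p1 p2 q1 q2, p1 \in A -> p2 \in A -> P p1 q1 -> P p2 q2 -> q1 != c -> q2 != c ->
     p1 = p2) ->
  splittable P c A.
Proof.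
move=> one_row R incR.
case: (pickP [pred pq : 'I_k * 'I_l | [&& pq.1 \in A, P pq.1 pq.2 & pq.2 != c]]).
  move=> [u q0] /and3P[/= uA Pu nu].
  have [sig sig_u inc] := splice_row_increasing R u (fun q => q < c) incR.
  by exists sig => // p q pA Ppq nq; rewrite (one_row p u q q0).
move=> none; exists (fun _ _ => true) => [|p q pA Ppq nq]; first exact: incR.
by have := none (p, q); rewrite /= pA Ppq nq.
Qed.

Lemma splittable_left : (forall p q, p \in A -> P p q -> q <= c) -> splittable P c A.
Proof.
move=> left R incR; exists (fun _ _ => true) => [|p q pA Ppq nq]; first exact: incR.
by rewrite ltn_neqAle (left p q pA Ppq) andbT.
Qed.

Lemma splittable_right : (forall p q, p \in A -> P p q -> c <= q) -> splittable P c A.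
Proof.
move=> right R incR; exists (fun _ _ => false) => [|p q pA Ppq nq]; first exact: incR.
by rewrite ltnNge (right p q pA Ppq).
Qed.

End Splittable.

Section Gluing.

Context {k l m n : nat} {P : 'M[bool]_(k, l)} {M : 'M[bool]_(m, n)} {r : 'I_k} {c : 'I_l}.
Hypothesis row_r : forall q, P r q -> q = c.

Context {pa pb : 'I_k -> 'I_l -> 'I_m * 'I_n} {i : 'I_m} {x : 'I_n}.
Hypotheses (pa_emb : embeds_except P M r c pa) (pb_emb : embeds_except P M r c pb).
Hypotheses (pa_r : (pa r c).1 = i) (pb_r : (pb r c).1 = i).
Hypotheses (pa_c : forall p, (pa p c).2 < x) (pb_c : forall p, x < (pb p c).2).

Let pick (s : bool) := if s then pa else pb.

Context {sig_above sig_below : 'I_k -> 'I_l -> bool}.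
Hypothesis above_inc : row_increasing (fun p q => (pick (sig_above p q) p q).1).
Hypothesis below_inc : row_increasing (fun p q => (pick (sig_below p q) p q).1).
Hypothesis above_ones :
  forall (p : 'I_k) q, p < r -> P p q -> q != c -> sig_above p q = (q < c).
Hypothesis below_ones :
  forall (p : 'I_k) q, r < p -> P p q -> q != c -> sig_below p q = (q < c).

Let sel (p : 'I_k) (q : 'I_l) := if p < r then sig_above p q else sig_below p q.

Definition glued (p : 'I_k) (q : 'I_l) : 'I_m * 'I_n :=
  (if (p < r) || (r < p) then (pick (sel p q) p q).1 else i,
   if q < c then (pa p q).2 else if c < q then (pb p q).2 else (pick (sel p q) p q).2).

Let pick_emb s : embeds_except P M r c (pick s). Proof. by case: s. Qed.
Let pick_r s : (pick s r c).1 = i. Proof. by case: s. Qed.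

Lemma glued_one_entry {p q} :
  P p q -> (p, q) != (r, c) -> exists s, glued p q = pick s p q.
Proof.
move=> Ppq ne; have {ne} ne_r : p != r.
  by apply: contraNneq ne => epr; rewrite epr (row_r q) // -epr.
have sel_q : q != c -> sel p q = (q < c).
  rewrite /sel; case: (ltngtP p r) => [lt|gt|/val_inj epr]; last by rewrite epr eqxx in ne_r.
  - exact: above_ones.
  - exact: below_ones.
exists (sel p q); rewrite [RHS]surjective_pairing /glued -neq_ltn ne_r.
have [->|nq] := eqVneq q c; first by rewrite ltnn.
by rewrite sel_q //; case: (ltngtP q c) nq => // /val_inj->; rewrite eqxx.
Qed.

Let left p (q : 'I_l) : q < c -> (pa p q).2 < x.
Proof. by case: pa_emb => _ _ cols lt; apply: ltn_trans (pa_c p); apply: cols. Qed.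

Let right p (q : 'I_l) : c < q -> x < (pb p q).2.
Proof. by case: pb_emb => _ _ cols lt; apply: ltn_trans (pb_c p) _; apply: cols. Qed.

Lemma glued_row_increasing : row_increasing (fun p q => (glued p q).1).
Proof.
have side s (p : 'I_k) q : (p < r -> (pick s p q).1 < i) /\ (r < p -> i < (pick s p q).1).
  by case: (pick_emb s) => _ rows _; split=> lt; rewrite -(pick_r s); apply: rows.
move=> i1 i2 j1 j2 lt12; rewrite /glued /sel /=.
case: (ltngtP i1 r) => [lt1|gt1|eq1]; case: (ltngtP i2 r) => [lt2|gt2|eq2] //=; try lia.
- exact: above_inc.
- exact: ltn_trans (proj1 (side _ _ _) lt1) (proj2 (side _ _ _) gt2).
- exact: (proj1 (side _ _ _) lt1).
- exact: below_inc.
- exact: (proj2 (side _ _ _) gt2).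
Qed.

Lemma glued_col_increasing : col_increasing (fun p q => (glued p q).2).
Proof.
have [[_ _ cols_a] [_ _ cols_b]] := (pa_emb, pb_emb).
have mid s p : (forall p' (q' : 'I_l), q' < c -> (pa p' q').2 < (pick s p c).2) /\
               (forall p' (q' : 'I_l), c < q' -> (pick s p c).2 < (pb p' q').2).
  case: s; split=> p' q' lt /=.
  - exact: cols_a.
  - exact: ltn_trans (pa_c p) (right _ _ lt).
  - exact: ltn_trans (left _ _ lt) (pb_c p).
  - exact: cols_b.
move=> i1 i2 j1 j2 lt12; rewrite /glued /=.
case: (ltngtP j1 c) => [lt1|gt1|eq1]; case: (ltngtP j2 c) => [lt2|gt2|eq2] //=; try lia.
- exact: cols_a.
- exact: ltn_trans (left _ _ lt1) (right _ _ gt2).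
- by rewrite (val_inj eq2); apply: (proj1 (mid _ _)).
- exact: cols_b.
- by rewrite (val_inj eq1); apply: (proj2 (mid _ _)).
Qed.

Lemma glued_embedding : M i x -> exists psi, is_embedding P M psi.
Proof.
have glued_emb : embeds_except P M r c glued.
  split=> [p q Ppq ne||]; [|exact: glued_row_increasing|exact: glued_col_increasing].
  by have [s ->] := glued_one_entry Ppq ne; case: (pick_emb s) => ones _ _; apply: ones.
move=> Mx; apply: (embeds_except_relocate glued_emb _ Mx).
- by rewrite /glued /= !ltnn.
- by move=> p q lt; rewrite /glued /= lt; apply: left.
- by move=> p q gt; rewrite /glued /= (ltnNge q c) (ltnW gt) gt; apply: right.
Qed.

End Gluing.

Lemma critical_pair_embedding {k l m n : nat} {P : 'M[bool]_(k, l)} {M : 'M[bool]_(m, n)}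
    {r : 'I_k} {c : 'I_l} {i : 'I_m} {ja jb x : 'I_n} :
  (forall q, P r q -> q = c) ->
  splittable P c [pred p : 'I_k | p < r] -> splittable P c [pred p : 'I_k | r < p] ->
  critical P (r, c) M (i, ja) -> critical P (r, c) M (i, jb) ->
  ja < x < jb -> M i x -> exists phi, is_embedding P M phi.
Proof.
move=> row_r above below /critical_embeds_except[pa pa_emb pa_e]
  /critical_embeds_except[pb pb_emb pb_e] /andP[ja_x x_jb] Mx.
have [[_ _ cols_a] [_ _ cols_b]] := (pa_emb, pb_emb).
have [pa_beyond|pa_c] := col_increasing_dichotomy_right c x cols_a.
  apply: (embeds_except_relocate pa_emb (congr1 fst pa_e) Mx _ pa_beyond).
  by move=> p q lt; apply: ltn_trans _ ja_x; have := cols_a p r q c lt; rewrite pa_e.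
have [pb_before|pb_c] := col_increasing_dichotomy_left c x cols_b.
  apply: (embeds_except_relocate pb_emb (congr1 fst pb_e) Mx pb_before).
  by move=> p q gt; apply: ltn_trans x_jb _; have := cols_b r p c q gt; rewrite pb_e.
pose R s p q := ((if s then pa else pb) p q).1.
have incR s : row_increasing (R s) by case: s; [case: pa_emb | case: pb_emb].
have [sig_a inc_a ones_a] := above R incR.
have [sig_b inc_b ones_b] := below R incR.
exact: (glued_embedding row_r pa_emb pb_emb (congr1 fst pa_e) (congr1 fst pb_e) pa_c pb_c
  inc_a inc_b ones_a ones_b Mx).
Qed.

Section ZeroRuns.

Context {m n : nat} {M : 'M[bool]_(m, n)} {i : 'I_m}.

Lemma zero_run_start_le {a1 b1 a2 b2 : 'I_n} :
  zero_run M i a1 b1 -> zero_run M i a2 b2 -> a2 <= b1 -> a2 <= a1.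
Proof.
case=> _ zero1 _ _ [_ _ left2 _] a2_b1; rewrite leqNgt; apply/negP => a1_a2.
have j_lt : a2.-1 < n := leq_ltn_trans (leq_pred a2) (ltn_ord a2).
have zj : M i (Ordinal j_lt) = false by apply: zero1 => /=; lia.
by have := left2 (Ordinal j_lt) (ltn_predK a1_a2); rewrite zj.
Qed.

Lemma zero_run_end_le {a1 b1 a2 b2 : 'I_n} :
  zero_run M i a1 b1 -> zero_run M i a2 b2 -> a1 <= b2 -> b1 <= b2.
Proof.
case=> _ zero1 _ _ [_ _ _ right2] a1_b2; rewrite leqNgt; apply/negP => b2_b1.
have j_lt : b2.+1 < n := leq_ltn_trans b2_b1 (ltn_ord b1).
have zj : M i (Ordinal j_lt) = false by apply: zero1 => /=; lia.
by have := right2 (Ordinal j_lt) erefl; rewrite zj.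
Qed.

Lemma zero_runs_separated {a1 b1 a2 b2 : 'I_n} :
  zero_run M i a1 b1 -> zero_run M i a2 b2 -> (a1, b1) != (a2, b2) -> (b1 < a2) || (b2 < a1).
Proof.
move=> run1 run2; apply: contraR; rewrite negb_or -!leqNgt => /andP[a2_b1 a1_b2].
have ea : a1 = a2.
  apply/val_inj/eqP.
  by rewrite eqn_leq (zero_run_start_le run2 run1 a1_b2) (zero_run_start_le run1 run2 a2_b1).
have eb : b1 = b2.
  apply/val_inj/eqP.
  by rewrite eqn_leq (zero_run_end_le run1 run2 a1_b2) (zero_run_end_le run2 run1 a2_b1).
by rewrite ea eb.
Qed.

End ZeroRuns.

Section RowBounding.

Context {k l : nat} {P : 'M[bool]_(k, l)} {r : 'I_k} {c : 'I_l}.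
Hypothesis row_r : forall q, P r q -> q = c.
Hypotheses (above : splittable P c [pred p : 'I_k | p < r])
           (below : splittable P c [pred p : 'I_k | r < p]).

Lemma separated_critical_runs_embedding {m n : nat} {M : 'M[bool]_(m, n)} {i : 'I_m}
    {a1 b1 a2 b2 : 'I_n} :
  critical_run P (r, c) M i a1 b1 -> critical_run P (r, c) M i a2 b2 -> b1 < a2 ->
  exists phi, is_embedding P M phi.
Proof.
move=> [[_ _ _ right1] [ja [/andP[_ ja_b1] crit_a]]] [_ [jb [/andP[a2_jb _] crit_b]]] b1_a2.
have x_lt : b1.+1 < n := leq_ltn_trans b1_a2 (ltn_ord a2).
pose x := Ordinal x_lt.
have Mx : M i x := right1 x erefl.
have x_jb : x < jb.
  rewrite ltn_neqAle (leq_trans b1_a2 a2_jb) andbT.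
  by apply: contraTneq Mx => /val_inj->; case: crit_b => ->.
by apply: (critical_pair_embedding row_r above below crit_a crit_b _ Mx); rewrite ltnS ja_b1.
Qed.

Lemma row_bounding_of_splittable : row_bounding P (r, c).
Proof.
exists 1 => m n M avoid i S crit_S; rewrite leqNgt; apply/negP.
case/card_gt1P => [[a1 b1] [[a2 b2] [in1 in2 ne]]].
have [run1 run2] := (crit_S _ in1, crit_S _ in2).
apply: avoid; case/orP: (zero_runs_separated run1.1 run2.1 ne) => sep.
- exact: separated_critical_runs_embedding run1 run2 sep.
- exact: separated_critical_runs_embedding run2 run1 sep.
Qed.

End RowBounding.

Section PatternTypes.

Context {k l : nat} {P : 'M[bool]_(k, l)} {r1 r2 : 'I_k} {c : 'I_l}.
Hypothesis in_band : forall (p : 'I_k) (q : 'I_l), r1 <= p <= r2 -> P p q -> q = c.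
Context {r : 'I_k}.
Hypothesis r_band : r1 <= r <= r2.

Let off_column {p : 'I_k} {q : 'I_l} : P p q -> q != c -> (p < r1) || (r2 < p).
Proof.
move=> Ppq; case: (ltnP p r1) => //= r1_p; case: (ltnP r2 p) => //= p_r2.
by rewrite (in_band p q _ Ppq) ?eqxx // r1_p p_r2.
Qed.

Let not_above_and_below {p : nat} : p < r -> r2 < p -> False.
Proof.
by case/andP: r_band => _ r_r2 lt gt; have := ltn_trans gt (leq_trans lt r_r2); rewrite ltnn.
Qed.

Let not_below_and_above {p : nat} : r < p -> p < r1 -> False.
Proof.
by case/andP: r_band => r1_r _ gt lt; have := ltn_trans lt (leq_ltn_trans r1_r gt); rewrite ltnn.
Qed.

Lemma splittable_above_one_row :
  (forall (p : 'I_k) (q : 'I_l), p < r1 -> P p q -> q = c \/ p.+1 = r1) ->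
  splittable P c [pred p : 'I_k | p < r].
Proof.
move=> top; apply: splittable_one_row => p1 p2 q1 q2; rewrite !inE => lt1 lt2 P1 P2 n1 n2.
suff row_r1 (p : 'I_k) (q : 'I_l) : p < r -> P p q -> q != c -> p.+1 = r1.
  by apply/val_inj/succn_inj; rewrite (row_r1 p1 q1 lt1 P1 n1) (row_r1 p2 q2 lt2 P2 n2).
move=> lt Ppq nq; case/orP: (off_column Ppq nq) => [p_r1|r2_p].
  by case: (top p q p_r1 Ppq) => // eq; rewrite eq eqxx in nq.
by case: (not_above_and_below lt r2_p).
Qed.

Lemma splittable_above_left :
  (forall (p : 'I_k) (q : 'I_l), p < r1 -> P p q -> q <= c) ->
  splittable P c [pred p : 'I_k | p < r].
Proof.
move=> top; apply: splittable_left => p q; rewrite inE => lt Ppq.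
have [-> //|nq] := eqVneq q c.
case/orP: (off_column Ppq nq) => [p_r1|r2_p]; first exact: top p q p_r1 Ppq.
by case: (not_above_and_below lt r2_p).
Qed.

Lemma splittable_below_one_row :
  (forall (p : 'I_k) (q : 'I_l), r2 < p -> P p q -> q = c \/ p = r2.+1 :> nat) ->
  splittable P c [pred p : 'I_k | r < p].
Proof.
move=> bot; apply: splittable_one_row => p1 p2 q1 q2; rewrite !inE => gt1 gt2 P1 P2 n1 n2.
suff row_r2 (p : 'I_k) (q : 'I_l) : r < p -> P p q -> q != c -> p = r2.+1 :> nat.
  by apply: val_inj; rewrite /= (row_r2 p1 q1 gt1 P1 n1) (row_r2 p2 q2 gt2 P2 n2).
move=> gt Ppq nq; case/orP: (off_column Ppq nq) => [p_r1|r2_p].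
  by case: (not_below_and_above gt p_r1).
by case: (bot p q r2_p Ppq) => // eq; rewrite eq eqxx in nq.
Qed.

Lemma splittable_below_right :
  (forall (p : 'I_k) (q : 'I_l), r2 < p -> P p q -> c <= q) ->
  splittable P c [pred p : 'I_k | r < p].
Proof.
move=> bot; apply: splittable_right => p q; rewrite inE => gt Ppq.
have [-> //|nq] := eqVneq q c.
case/orP: (off_column Ppq nq) => [p_r1|r2_p]; last exact: bot p q r2_p Ppq.
by case: (not_below_and_above gt p_r1).
Qed.

End PatternTypes.

Theorem lemma3p11 (k l : nat) (P : 'M[bool]_(k, l)) (r1 r2 : 'I_k) (c : 'I_l) :
  (r1 <= r2)%N ->
  (forall (r : 'I_k) (j : 'I_l), (r1 <= r <= r2)%N -> P r j -> j = c) ->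
  (* Type 1 *)
  ( ((forall (i : 'I_k) (j : 'I_l), (i < r1)%N -> P i j -> j = c \/ i.+1 = r1) /\
     (forall (i : 'I_k) (j : 'I_l), (r2 < i)%N -> P i j -> j = c \/ i = r2.+1 :> nat))
  (* Type 2 *)
  \/ ((forall (i : 'I_k) (j : 'I_l), (i < r1)%N -> P i j -> j = c \/ i.+1 = r1) /\
      (forall (i : 'I_k) (j : 'I_l), (r2 < i)%N -> P i j -> (c <= j)%N))
  (* Type 3 *)
  \/ ((forall (i : 'I_k) (j : 'I_l), (i < r1)%N -> P i j -> (j <= c)%N) /\
      (forall (i : 'I_k) (j : 'I_l), (r2 < i)%N -> P i j -> (c <= j)%N)) ) ->
  forall r : 'I_k, (r1 <= r <= r2)%N -> P r c -> row_bounding P (r, c).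
Proof.
move=> _ in_band types r r_band _.
have [above below] :
    splittable P c [pred p : 'I_k | p < r] /\ splittable P c [pred p : 'I_k | r < p].
  case: types => [[top bot]|[[top bot]|[top bot]]]; split.
  - exact: (splittable_above_one_row in_band r_band top).
  - exact: (splittable_below_one_row in_band r_band bot).
  - exact: (splittable_above_one_row in_band r_band top).
  - exact: (splittable_below_right in_band r_band bot).
  - exact: (splittable_above_left in_band r_band top).
  - exact: (splittable_below_right in_band r_band bot).
exact: row_bounding_of_splittable (fun q => in_band r q r_band) above below.
Qed.
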